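(* Let $m=(m_\lambda)_{\lambda\in\Lambda}$ be a formal tuple with $m_\lambda=G_0^\lambda+YG_1^\lambda$, where $G_0^\lambda,G_1^\lambda\in K[[s_\lambda]]$ for $\lambda\in\Lambda_0$ and $G_0^\infty,G_1^\infty\in s_\infty K[[s_\infty]]$, and suppose that for every $\lambda\in\Lambda$ $$\partial_tG_0^\lambda=0,\qquad \partial_tG_1^\lambda+\phi_\lambda(h)\,G_1^\lambda=\sum_{\lambda'\in\Lambda}\phi_\lambda\Big(\Pr_{\lambda'}\big(\phi_{\lambda'}(h)G_1^{\lambda'}\big)\Big)$$ (the formal version of the equation $\nabla_c(m)=0$; the right-hand side only involves the constant terms $G_1^{\lambda_i}(0)$, since $h$ has simple poles at the $\lambda_i$ and vanishes at $\infty$). Then $m\in M_c$, i.e. every $G_j^\lambda$ converges on the open unit disc $|s_\lambda|<1$; hence $m\in H$.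
   Context: Standing setup. Let $k$ be a finite field of odd characteristic $p$, $W(k)$ its ring of Witt vectors, $K$ the fraction field of $W(k)$, $|\cdot|$ the $p$-adic absolute value. Let $g\ge1$ and let $\lambda_1,\dots,\lambda_{2g+1}\in W(k)$ have pairwise distinct reductions modulo $p$. Put $Q(t)=\prod_{i=1}^{2g+1}(t-\lambda_i)$ and $h(t)=\frac{Q'(t)}{2Q(t)}$. Let $\Lambda=\{\lambda_1,\dots,\lambda_{2g+1},\infty\}$, $\Lambda_0=\Lambda\setminus\{\infty\}$. The local parameter at $\lambda\in\Lambda_0$ is $s_\lambda=t-\lambda$, and at $\infty$ it is $s_\infty=t^{-1}$; $\partial_t$ acts on series in $s_\lambda$ ($\lambda$ finite) as $d/ds_\lambda$ and on series in $s_\infty$ as $-s_\infty^2\,d/ds_\infty$. Let $B_K^\dagger$ be the ring of series $\sum_{\underline\ell\ge0}a_{\underline\ell}\,t^{\ell_0}\prod_{i}(t-\lambda_i)^{-\ell_i}$ ($a_{\underline\ell}\in K$) for which there is $\eta>1$ with $|a_{\underline\ell}|\eta^{\max_i\ell_i}\to0$; $\phi_\lambda(f)$ is the Laurent expansion of $f\in B_K^\dagger$ in $s_\lambda$. The principal part is $\Pr_\lambda(\sum a_\ell s_\lambda^\ell)=\sum_{\ell<0}a_\ell s_\lambda^\ell$ for $\lambda\in\Lambda_0$ and $\Pr_\infty(\sum a_\ell s_\infty^\ell)=\sum_{\ell\le0}a_\ell s_\infty^\ell$; its expansion at another point $\mu$ is denoted $\phi_\mu(\cdot)$ (and $\phi_\lambda(\Pr_\lambda(F))=\Pr_\lambda(F)$).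 For $\lambda\in\Lambda_0$, $\tilde R_{\lambda,c}$ is the space of $\sum_{\ell\ge0}a_\ell s_\lambda^\ell$ with $|a_\ell|\eta^\ell\to0$ for all $\eta<1$, and $R_{\infty,c}$ the analogous space of $\sum_{\ell\ge1}a_\ell s_\infty^\ell$. $B_c=\prod_{\lambda\in\Lambda_0}\tilde R_{\lambda,c}\times R_{\infty,c}$ is a $B_K^\dagger$-module via $(f\cdot G)^\mu=\phi_\mu(f)G^\mu-\sum_{\lambda\in\Lambda}\phi_\mu\big(\Pr_\lambda(\phi_\lambda(f)G^\lambda)\big)$. Let $A_K^\dagger=B_K^\dagger\oplus B_K^\dagger Y$ with $Y^2=Q(t)$, $\nabla_{GM}(1)=0$, $\nabla_{GM}(Y)=hY$; $M_c=A_K^\dagger\otimes_{B_K^\dagger}B_c$ with elements $m_c=1\otimes G_0+Y\otimes G_1$ ($G_0,G_1\in B_c$) and $\nabla_c(m_c)=1\otimes\partial_tG_0+Y\otimes(\partial_tG_1+h\cdot G_1)$. $H=\ker\nabla_c$ (the space $H^1_{MW,c}(V,\pi_*A_K^\dagger)$). *)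

From HB Require Import structures.
From mathcomp Require Import all_boot all_order all_algebra.
Set Implicit Arguments. Unset Strict Implicit. Unset Printing Implicit Defensive.
Import Order.TTheory GRing.Theory Num.Theory.
Local Open Scope ring_scope.

Section Defs.
Variable K : fieldType.

(* v is the normalized discrete valuation on K^x (v p = 1); |x| = p^{-v x}.
   vge v x N  <->  |x| <= p^{-N}  (x = 0 allowed). *)
Definition vge (v : K -> int) (x : K) (N : int) : Prop := x = 0 \/ N <= v x.

(* K is a complete discretely valued field of characteristic 0, with
   normalized valuation v, v(p) = 1 (absolutely unramified) and finite
   residue field (of characteristic p, p an odd prime).  By Cohen's
   structure theorem such a K is exactly Frac W(k), k a finite field of
   odd characteristic p, with its p-adic valuation. *)
Definition Witt_frac_field (p : nat) (v : K -> int) : Prop :=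
  [/\ prime p /\ (2 < p)%N,
      (forall n : nat, (n.+1)%:R != 0 :> K),
      (forall x y : K, x != 0 -> y != 0 -> v (x * y) = v x + v y)
        /\ (forall x y : K, x != 0 -> y != 0 -> x + y != 0 ->
              Num.min (v x) (v y) <= v (x + y))
        /\ v (p%:R) = 1,
      (forall u : nat -> K,
        (forall N : int, exists M : nat, forall m n : nat,
            (M <= m)%N -> (M <= n)%N -> vge v (u m - u n) N) ->
        exists l : K, forall N : int, exists M : nat, forall n : nat,
            (M <= n)%N -> vge v (u n - l) N)
    & (* finite residue field *)
      (exists s : seq K, (forall r, r \in s -> vge v r 0) /\
         forall x : K, vge v x 0 -> exists2 r, r \in s & vge v (x - r) 1)].

(* Convergence on the open unit disc of sum_l a_l s^l:
   |a_l| eta^l -> 0 for every eta < 1.  Writing eta = p^{-c}, c > 0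
   (rational c suffice by monotonicity), this says
   v(a_l) + c*l -> +oo. *)
Definition conv_open_disc (v : K -> int) (a : nat -> K) : Prop :=
  forall c : rat, 0 < c -> forall N : int, exists L : nat, forall l : nat,
    (L <= l)%N -> a l = 0 \/ (N%:~R <= (v (a l))%:~R + c * l%:R :> rat).

Definition ps_mul (f g : nat -> K) : nat -> K :=
  fun n => \sum_(i < n.+1) f i * g (n - i)%N.

Fixpoint ps_inv_seq (u : nat -> K) (n : nat) : seq K :=
  match n with
  | 0 => [:: (u 0%N)^-1]
  | m.+1 => let s := ps_inv_seq u m in
            rcons s (- (u 0%N)^-1 * \sum_(k < m.+1) u k.+1 * nth 0 s (m - k)%N)
  end.
Definition ps_inv (u : nat -> K) : nat -> K := fun n => nth 0 (ps_inv_seq u n) n.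

(* a Laurent series (n, f) stands for s^{-n} * sum_k f_k s^k *)
Definition laurent := (nat * (nat -> K))%type.
Definition lcoef (L : laurent) (j : int) : K :=
  match (j + (L.1)%:Z)%R with Posz k => L.2 k | Negz _ => 0 end.
Definition lmul_ps (L : laurent) (g : nat -> K) : laurent := (L.1, ps_mul L.2 g).
Definition ps_laurent (f : nat -> K) : laurent := (0%N, f).

(* a point is Some i (the point lam i, parameter s = t - lam i) or None (oo,
   parameter s = 1/t). *)
Variable N : nat.
Variable lam : 'I_N -> K.

Definition expand_fin (a : K) (P R : {poly K}) : laurent :=
  let P' := P \Po ('X + a%:P) in
  let R' := R \Po ('X + a%:P) in
  let m := find (fun c => c != 0) R' in
  (m, ps_mul (fun k => P'`_k) (ps_inv (fun k => R'`_(k + m)))).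

(* Laurent expansion at oo (in s = 1/t) of P/R (R != 0):
   P(1/s)/R(1/s) = s^{deg R - deg P} revP(s)/revR(s). *)
Definition rev_coef (P : {poly K}) (k : nat) : K :=
  if (k <= (size P).-1)%N then P`_((size P).-1 - k) else 0.
Definition expand_inf (P R : {poly K}) : laurent :=
  let dP := (size P).-1 in let dR := (size R).-1 in
  (dP, fun k => if (dR <= k)%N
                then ps_mul (rev_coef P) (ps_inv (rev_coef R)) (k - dR)%N
                else 0).

Definition expand (x : option 'I_N) (P R : {poly K}) : laurent :=
  match x with Some i => expand_fin (lam i) P R | None => expand_inf P R end.

(* principal part Pr_x(L) of a Laurent series L in s_x, as a rational function
   num/den of t *)
Definition pr_num (x : option 'I_N) (L : laurent) : {poly K} :=
  match x with
  | Some i => \sum_(k < L.1) L.2 k *: ('X - (lam i)%:P) ^+ k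
  | None => \sum_(k < L.1.+1) L.2 k *: 'X ^+ (L.1 - k)%N
  end.
Definition pr_den (x : option 'I_N) (L : laurent) : {poly K} :=
  match x with
  | Some i => ('X - (lam i)%:P) ^+ L.1
  | None => 1
  end.

Definition expand_pr (mu x : option 'I_N) (L : laurent) : laurent :=
  expand mu (pr_num x L) (pr_den x L).

Definition Qpoly : {poly K} := \prod_(i < N) ('X - (lam i)%:P).
Definition h_num : {poly K} := Qpoly^`().
Definition h_den : {poly K} := 2%:P * Qpoly.
Definition phi_h (x : option 'I_N) : laurent := expand x h_num h_den.

(* d/dt on power series in s_x: d/ds at finite points, -s^2 d/ds at oo *)
Definition dt (x : option 'I_N) (f : nat -> K) : nat -> K :=
  match x with
  | Some _ => fun n => (n.+1)%:R * f n.+1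
  | None => fun n => if n is m.+1 then - (m%:R * f m) else 0
  end.

End Defs.

From HB Require Import structures.
From mathcomp Require Import all_boot all_order all_algebra.
From mathcomp Require Import zify ring.
Set Implicit Arguments. Unset Printing Implicit Defensive.
Import Order.TTheory GRing.Theory Num.Theory.
Local Open Scope ring_scope.

(* Fix a point x of Lambda with local parameter s.  The equation for G0 says
   that G0 is constant, hence convergent.  For G1, multiplying by s turns the
   equation into an Euler-type equation for the coefficient sequence,
        sigma (s d/ds) G + f G = E,        sigma = 1 (finite x), -1 (x = oo),
   where E is the (shifted) sum of principal parts, whose coefficients are
   bounded because all denominators are units of W(k)[[s]], and
   f = s phi_x(h) = a + sigma (s d/ds) U / (2U) for an integral polynomial U
   with unit constant term (U = Q(lambda_i + s)/s, resp. s^(2g+1) Q(1/s)).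
   With the integrating factor V = sqrt(U/U(0)), integral since p is odd,
   the equation becomes diagonal: (sigma n + a) (V G)_n = (V E)_n.  As
   sigma n + a = +-m/2 with m odd and m <= 2n + 2g + 1, this gives
   v(G_n) >= B - log_p(2n + 2g + 1), which forces convergence on |s| < 1. *)

(* Polynomial growth is eventually dominated by 2^e; hence
   c (log_p (2l + A) + D) <= l for l large, which is what converts
   logarithmic coefficient bounds into convergence on the open disc. *)
Lemma sq_le_exp2 e : (e * e <= 4 * 2 ^ e)%N.
Proof.
elim: e => [|e ih] //; case: (ltnP e 3) => he; first by case: e he {ih} => [|[|[|]]].
rewrite expnS; nia.
Qed.

Lemma exp2_dominates_linear a : exists E0, forall e, (E0 <= e)%N -> (a * e < 2 ^ e)%N.
Proof.
exists (8 * a).+1 => e he; have := sq_le_exp2 e.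
have : (0 < 2 ^ e)%N by rewrite expn_gt0.
nia.
Qed.

Lemma trunc_log_sublinear p A c D : (1 < p)%N ->
  exists L, forall l, (L <= l)%N -> (c * (trunc_log p (2 * l + A) + D) <= l)%N.
Proof.
move=> p1; have [E0 hE] := exp2_dominates_linear (2 * c + (2 * c * D + A + 1)).
exists (c * (E0 + D))%N => l hl; set e := trunc_log p (2 * l + A).
have [small|big] := leqP e E0.
  by apply: leq_trans hl; rewrite leq_mul2l leq_add2r small orbT.
have pos : (0 < 2 * l + A)%N.
  by rewrite lt0n; apply: contraTneq big => h; rewrite /e h trunc_log0.
have lin_lt_exp := hE e (ltnW big).
have exp2_le : (2 ^ e <= p ^ e)%N by rewrite leq_exp2r ?(leq_ltn_trans _ big) // ltnW.
have expp_le : (p ^ e <= 2 * l + A)%N by apply: trunc_logP.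
nia.
Qed.

(* Power series are handled through their truncations: an identity between
   series is checked degree by degree on polynomials. *)
Section Truncation.
Context {R : comNzRingType}.
Implicit Types (P Q S : {poly R}) (f : nat -> R).

Definition tr n f : {poly R} := \poly_(i < n.+1) f i.

Definition eqM M P Q := forall k, (k <= M)%N -> P`_k = Q`_k.

Definition Dp P : {poly R} := 'X * P^`().

Lemma coef_tr n f k : (k <= n)%N -> (tr n f)`_k = f k.
Proof. by move=> h; rewrite coef_poly ltnS h. Qed.

Lemma coef_Dp P k : (Dp P)`_k = k%:R * P`_k.
Proof.
rewrite /Dp coefXM; case: k => [|k] /=; first by rewrite mul0r.
by rewrite coef_deriv mulr_natl.
Qed.

Lemma Dp_mul P Q : Dp (P * Q) = Dp P * Q + P * Dp Q.
Proof. by rewrite /Dp derivM; ring. Qed.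

Lemma Dp_C c : Dp c%:P = 0.
Proof. by rewrite /Dp derivC mulr0. Qed.

Variable M : nat.

Lemma eqM_refl P : eqM M P P. Proof. by []. Qed.

Lemma eqM_eq P Q : P = Q -> eqM M P Q.
Proof. by move->. Qed.

Lemma eqM_sym P Q : eqM M P Q -> eqM M Q P.
Proof. by move=> h k hk; rewrite h. Qed.

Lemma eqM_trans P Q S : eqM M P Q -> eqM M Q S -> eqM M P S.
Proof. by move=> h1 h2 k hk; rewrite h1 // h2. Qed.

Lemma eqM_add P P' Q Q' : eqM M P P' -> eqM M Q Q' -> eqM M (P + Q) (P' + Q').
Proof. by move=> h1 h2 k hk; rewrite !coefD h1 // h2. Qed.

Lemma eqM_sub P P' Q Q' : eqM M P P' -> eqM M Q Q' -> eqM M (P - Q) (P' - Q').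
Proof. by move=> h1 h2 k hk; rewrite !coefB h1 // h2. Qed.

Lemma eqM_subr0 P Q : eqM M (P - Q) 0 -> eqM M P Q.
Proof. by move=> h k hk; apply/eqP; rewrite -subr_eq0 -coefB h // coef0. Qed.

(* The coefficients of degree <= M of a product only involve coefficients of
   degree <= M of the factors. *)
Lemma eqM_mul P P' Q Q' : eqM M P P' -> eqM M Q Q' -> eqM M (P * Q) (P' * Q').
Proof.
move=> h1 h2 k hk; rewrite !coefM; apply: eq_bigr => -[j /= hj] _.
have hjk : (j <= k)%N by rewrite -ltnS.
by rewrite h1 ?h2 //; apply: leq_trans hk; rewrite ?leq_subr.
Qed.

Lemma eqM_Dp P Q : eqM M P Q -> eqM M (Dp P) (Dp Q).
Proof. by move=> h k hk; rewrite !coef_Dp h. Qed.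

Lemma tr_scale c f : tr M (fun k => c * f k) = c%:P * tr M f.
Proof. by apply/polyP => k; rewrite coefCM !coef_poly; case: ifP; rewrite ?mulr0. Qed.

End Truncation.

Arguments eqM_refl {R M} P k _.

Lemma eqM_cancel (R : idomainType) M (U X : {poly R}) :
  U`_0 != 0 -> eqM M (U * X) 0 -> eqM M X 0.
Proof.
move=> U0 h; elim: M h => [|M ih] h k hk.
  move: hk; rewrite leqn0 coef0 => /eqP ->.
  have := h 0%N isT; rewrite coefM big_ord1 coef0 => /eqP.
  by rewrite mulf_eq0 (negPf U0) => /eqP.
have ihM : eqM M X 0 by apply: ih => j hj; apply: h; apply: leqW.
rewrite leq_eqVlt in hk; case/orP: hk => [/eqP ->|hk]; last exact: ihM.
have := h M.+1 (leqnn _); rewrite coefM big_ord_recl subn0 coef0 big1 ?addr0.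
  by move/eqP; rewrite mulf_eq0 (negPf U0) => /eqP.
by move=> i _; rewrite ihM ?coef0 ?mulr0 //= subSS leq_subr.
Qed.

Arguments eqM_cancel {R M U X} _ _ k _.

Lemma find_first_nonzero {R : nmodType} {s : seq R} {k} :
  (forall j, (j < k)%N -> nth 0 s j = 0) -> nth 0 s k != 0 ->
  find (fun c => c != 0) s = k.
Proof.
elim: s k => [|x s ih] k below hk; first by rewrite nth_nil eqxx in hk.
case: k below hk => [|k] below hk /=; first by rewrite hk.
have -> : x = 0 := below 0%N isT.
rewrite eqxx /=; congr S; apply: ih => // j hj.
exact: (below j.+1).
Qed.

Section PowerSeries.
Context {K : fieldType}.
Implicit Types (f g u : nat -> K).

Lemma eq_ps_mul f f' g g' n : f =1 f' -> g =1 g' -> ps_mul f g n = ps_mul f' g' n.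
Proof. by move=> hf hg; apply: eq_bigr => i _; rewrite hf hg. Qed.

Lemma eqM_ps_mul M f g : eqM M (tr M f * tr M g) (tr M (ps_mul f g)).
Proof.
move=> k hk; rewrite coefM coef_tr //; apply: eq_bigr => -[j /= hj] _.
have hjk : (j <= k)%N by rewrite -ltnS.
by rewrite !coef_tr //; apply: leq_trans hk; rewrite ?leq_subr.
Qed.

Lemma ps_mul_shift (F f g : nat -> K) d n : (forall k, (k < d)%N -> F k = 0) ->
  (forall k, F (k + d)%N = f k) -> ps_mul F g (n + d) = ps_mul f g n.
Proof.
move=> h0 hs; rewrite /ps_mul -(big_mkord xpredT (fun i => F i * g (n + d - i)%N)).
rewrite -(big_mkord xpredT (fun i => f i * g (n - i)%N)).
rewrite (@big_cat_nat _ _ _ d 0 (n + d).+1) //=; last by rewrite -addSn leq_addl.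
rewrite big_nat_cond big1 ?add0r; last first.
  by move=> i /andP[/andP[_ hi] _]; rewrite h0 // mul0r.
rewrite -{1}[d]add0n big_addn -addSn addnK.
by apply: eq_bigr => i _; rewrite hs subnDr.
Qed.

Lemma ps_inv_seq_size u n : size (ps_inv_seq u n) = n.+1.
Proof. by elim: n => //= n ih; rewrite size_rcons ih. Qed.

Lemma ps_inv_seq_nth u n k : (k <= n)%N -> nth 0 (ps_inv_seq u n) k = ps_inv u k.
Proof.
move=> hk; rewrite /ps_inv; elim: n hk => [|n ih] hk.
  by move: hk; rewrite leqn0 => /eqP ->.
rewrite leq_eqVlt in hk; case/orP: hk => [/eqP -> //|hk].
by rewrite /= nth_rcons ps_inv_seq_size hk ih.
Qed.

Lemma ps_invS u m :
  ps_inv u m.+1 = - (u 0%N)^-1 * \sum_(k < m.+1) u k.+1 * ps_inv u (m - k)%N.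
Proof.
rewrite {1}/ps_inv /= nth_rcons ps_inv_seq_size ltnn eqxx.
congr (_ * _); apply: eq_bigr => -[k hk] _ /=.
by rewrite ps_inv_seq_nth // leq_subr.
Qed.

Lemma eq_ps_inv u u' : u =1 u' -> ps_inv u =1 ps_inv u'.
Proof.
move=> h n; rewrite /ps_inv; congr (nth 0 _ n).
elim: n => [|n ih] /=; first by rewrite h.
by rewrite ih h; congr (rcons _ (_ * _)); apply: eq_bigr => k _; rewrite h.
Qed.

Lemma ps_invP u n : u 0%N != 0 -> ps_mul u (ps_inv u) n = (n == 0%N)%:R.
Proof.
move=> u0; case: n => [|m]; first by rewrite /ps_mul big_ord1 /ps_inv /= mulfV.
rewrite /ps_mul big_ord_recl /= subn0 ps_invS mulrA mulrN mulfV // mulN1r.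
rewrite addrC; apply/eqP; rewrite subr_eq0; apply/eqP.
by apply: eq_bigr => -[k hk] _ /=; rewrite subSS.
Qed.

Lemma eqM_ps_inv M u : u 0%N != 0 -> eqM M (tr M u * tr M (ps_inv u)) 1.
Proof.
move=> u0; apply: (eqM_trans (eqM_ps_mul _ _ _)) => k hk.
by rewrite coef_tr // ps_invP // coef1.
Qed.

Lemma ps_mul_inv_cancel {u} P n : u 0%N != 0 -> ps_mul u (ps_mul P (ps_inv u)) n = P n.
Proof.
move=> u0; have : eqM n (tr n (ps_mul u (ps_mul P (ps_inv u)))) (tr n P).
  apply: (eqM_trans (eqM_sym (eqM_ps_mul _ _ _))).
  apply: (eqM_trans (eqM_mul (eqM_refl _) (eqM_sym (eqM_ps_mul _ P (ps_inv u))))).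
  rewrite mulrCA -[X in eqM _ _ X]mulr1.
  exact: (eqM_mul (eqM_refl _) (eqM_ps_inv _ _ u0)).
by move/(_ n (leqnn n)); rewrite !coef_tr.
Qed.

Lemma ps_inv_mul_cancel {u} P n : u 0%N != 0 -> ps_mul (ps_inv u) (ps_mul u P) n = P n.
Proof.
move=> u0; have : eqM n (tr n (ps_mul (ps_inv u) (ps_mul u P))) (tr n P).
  apply: (eqM_trans (eqM_sym (eqM_ps_mul _ _ _))).
  apply: (eqM_trans (eqM_mul (eqM_refl _) (eqM_sym (eqM_ps_mul _ u P)))).
  rewrite mulrA [_ * tr n u]mulrC -[X in eqM _ _ X]mul1r.
  exact: (eqM_mul (eqM_ps_inv _ _ u0) (eqM_refl _)).
by move/(_ n (leqnn n)); rewrite !coef_tr.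
Qed.

(* The square root of a series u with u 0 = 1, computed coefficient by
   coefficient from (sqrt u)^2 = u; this needs 2 != 0. *)
Fixpoint ps_sqrt_seq u n : seq K :=
  match n with
  | 0 => [:: 1]
  | m.+1 => let s := ps_sqrt_seq u m in
      rcons s ((u m.+1 - \sum_(k < m) nth 0 s k.+1 * nth 0 s (m - k)%N) / 2%:R)
  end.
Definition ps_sqrt u n : K := nth 0 (ps_sqrt_seq u n) n.

Lemma ps_sqrt_seq_size u n : size (ps_sqrt_seq u n) = n.+1.
Proof. by elim: n => //= n ih; rewrite size_rcons ih. Qed.

Lemma ps_sqrt_seq_nth u n k : (k <= n)%N -> nth 0 (ps_sqrt_seq u n) k = ps_sqrt u k.
Proof.
move=> hk; rewrite /ps_sqrt; elim: n hk => [|n ih] hk.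
  by move: hk; rewrite leqn0 => /eqP ->.
rewrite leq_eqVlt in hk; case/orP: hk => [/eqP -> //|hk].
by rewrite /= nth_rcons ps_sqrt_seq_size hk ih.
Qed.

Lemma ps_sqrt0 u : ps_sqrt u 0 = 1. Proof. by []. Qed.

Lemma ps_sqrtS u m : ps_sqrt u m.+1 =
  (u m.+1 - \sum_(k < m) ps_sqrt u k.+1 * ps_sqrt u (m - k)%N) / 2%:R.
Proof.
rewrite {1}/ps_sqrt /= nth_rcons ps_sqrt_seq_size ltnn eqxx.
congr ((_ - _) / _); apply: eq_bigr => -[k hk] _ /=.
by rewrite !ps_sqrt_seq_nth // ?leq_subr.
Qed.

Lemma ps_sqrtP u n : 2%:R != 0 :> K -> u 0%N = 1 ->
  ps_mul (ps_sqrt u) (ps_sqrt u) n = u n.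
Proof.
move=> h2 u0; case: n => [|m]; first by rewrite /ps_mul big_ord1 ps_sqrt0 mulr1.
rewrite /ps_mul big_ord_recl big_ord_recr /= subn0 subnn ps_sqrt0 mul1r mulr1 ps_sqrtS.
set S := \sum_(k < m) _.
by rewrite addrCA -mulr2n -[X in S + X]mulr_natr mulfVK // addrC subrK.
Qed.

End PowerSeries.

(* A field K with a discrete valuation v normalized by v p = 1, of residue
   characteristic an odd prime p and of characteristic 0 (the hypotheses of
   Witt_frac_field that matter here); vge v x N means |x| <= p^(-N). *)
Section Valuation.
Context {K : fieldType} (v : K -> int) {p : nat}.
Hypothesis p_prime : prime p.
Hypothesis p_gt2 : (2 < p)%N.
Hypothesis char0 : forall n : nat, (n.+1)%:R != 0 :> K.
Hypothesis vM : forall {x y : K}, x != 0 -> y != 0 -> v (x * y) = v x + v y.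
Hypothesis vD : forall {x y : K}, x != 0 -> y != 0 -> x + y != 0 ->
  Num.min (v x) (v y) <= v (x + y).
Hypothesis vp : v p%:R = 1.

Lemma v1 : v 1 = 0.
Proof.
have := vM (oner_neq0 K) (oner_neq0 K); rewrite mulr1 => e.
by apply: (addrI (v 1)); rewrite addr0 -e.
Qed.

Lemma vN x : v (- x) = v x.
Proof.
have N10 : (-1 : K) != 0 by rewrite oppr_eq0 oner_neq0.
have vN1 : v (-1) = 0.
  have := vM N10 N10; rewrite mulrNN mulr1 v1 => /eqP.
  by rewrite eq_sym -mulr2z mulrn_eq0 /= => /eqP.
have [->|x0] := eqVneq x 0; first by rewrite oppr0.
by rewrite -mulN1r vM // vN1 add0r.
Qed.

Lemma vV x : x != 0 -> v x^-1 = - v x.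
Proof.
move=> x0; have := vM x0 (invr_neq0 x0); rewrite mulfV // v1 => e.
by apply: (addrI (v x)); rewrite -e subrr.
Qed.

Lemma vge_le {x a b} : vge v x a -> b <= a -> vge v x b.
Proof. by case=> [->|h] hb; [left|right; apply: le_trans h]. Qed.

Lemma vge_mul x y a b : vge v x a -> vge v y b -> vge v (x * y) (a + b).
Proof.
have [->|x0] := eqVneq x 0; first by rewrite mul0r; left.
have [->|y0] := eqVneq y 0; first by rewrite mulr0; left.
case=> [/eqP|ha]; first by rewrite (negPf x0).
case=> [/eqP|hb]; first by rewrite (negPf y0).
by right; rewrite vM // lerD.
Qed.

Lemma vge_mul0 x y b : vge v x 0 -> vge v y b -> vge v (x * y) b.
Proof. by move=> hx hy; have := vge_mul hx hy; rewrite add0r. Qed.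

Lemma vge_add x y a : vge v x a -> vge v y a -> vge v (x + y) a.
Proof.
have [->|x0] := eqVneq x 0; first by rewrite add0r.
have [->|y0] := eqVneq y 0; first by rewrite addr0.
have [->|s0] := eqVneq (x + y) 0; first by left.
case=> [/eqP|ha]; first by rewrite (negPf x0).
case=> [/eqP|hb]; first by rewrite (negPf y0).
by right; apply: le_trans (vD x0 y0 s0); rewrite le_min ha hb.
Qed.

Lemma vge_opp x a : vge v x a -> vge v (- x) a.
Proof. by case=> [->|h]; [left; rewrite oppr0|right; rewrite vN]. Qed.

Lemma vge_sub x y a : vge v x a -> vge v y a -> vge v (x - y) a.
Proof. by move=> hx hy; apply: vge_add hx (vge_opp hy). Qed.

Lemma vge_sum (I : Type) (r : seq I) (P : pred I) (F : I -> K) a :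
  (forall i, P i -> vge v (F i) a) -> vge v (\sum_(i <- r | P i) F i) a.
Proof.
move=> h; elim/big_rec: _ => [|i x Pi hx]; first by left.
by apply: vge_add => //; apply: h.
Qed.

Lemma vge_nat n : vge v n%:R 0.
Proof.
elim: n => [|n ih]; first by left.
by rewrite -natr1; apply: vge_add => //; right; rewrite v1.
Qed.

Lemma vge_div {x y a} : vge v x a -> y != 0 -> vge v (x / y) (a - v y).
Proof. by move=> hx y0; apply: vge_mul hx _; right; rewrite vV. Qed.

Lemma vge_div_unit {x y a} : vge v x a -> y != 0 -> v y = 0 -> vge v (x / y) a.
Proof. by move=> hx y0 vy; have := vge_div hx y0; rewrite vy subr0. Qed.

Lemma v_coprime b : (0 < b)%N -> coprime b p -> v b%:R = 0.
Proof.
move=> b0 cop; have [a _ /dvdnP [k hk]] := Bezoutl b (prime_gt0 p_prime).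
move: cop; rewrite /coprime gcdnC => /eqP g1; rewrite g1 in hk.
have b_ne0 : b%:R != 0 :> K by rewrite -(prednK b0) char0.
have : 0 <= v b%:R by case: (vge_nat b) => // /eqP; rewrite (negPf b_ne0).
rewrite le_eqVlt eq_sym => /orP[/eqP // | vb_gt0]; exfalso.
have one_eq : (1 : K) = (k * p)%:R - a%:R * b%:R by rewrite -hk natrD natrM addrK.
have : vge v (1 : K) 1.
  rewrite one_eq natrM; apply: vge_sub; apply: vge_mul0; try exact: vge_nat.
    by right; rewrite vp.
  by right; rewrite -gtz0_ge1.
by case=> [/eqP|]; rewrite ?oner_eq0 // v1.
Qed.

Lemma v_pow_p n : v (p ^ n)%:R = n%:Z.
Proof.
have p0 : p%:R != 0 :> K by rewrite -(prednK (prime_gt0 p_prime)) char0.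
elim: n => [|n ih]; first by rewrite expn0 v1.
rewrite expnS natrM vM // ?natrX ?expf_neq0 // -natrX ih vp.
by rewrite -addn1 PoszD addrC.
Qed.

Lemma v_nat_le n : (0 < n)%N -> v n%:R <= (trunc_log p n)%:Z.
Proof.
move=> n0; have p1 := prime_gt1 p_prime.
have nz m : (0 < m)%N -> m%:R != 0 :> K by case: m => // m _; apply: char0.
rewrite -{1}(partnC p n0) natrM vM ?nz ?part_gt0 //.
rewrite p_part v_pow_p v_coprime ?part_gt0 //; last first.
  by rewrite coprime_sym (pnat_coprime (pnat_id p_prime)) // part_pnat.
rewrite addr0 lez_nat; apply: trunc_log_max => //.
by rewrite -p_part dvdn_leq // dvdn_part.
Qed.

Lemma v2 : v 2%:R = 0.
Proof.
apply: v_coprime => //; rewrite coprime_sym prime_coprime //.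
by apply/negP => /(dvdn_leq (isT : (0 < 2)%N)); rewrite leqNgt p_gt2.
Qed.

(* The half-integers m/2, m odd, are the denominators met when solving the
   Euler equations: they are nonzero, with valuation at most log_p m. *)
Lemma v_half_odd m : odd m ->
  m%:R / 2%:R != 0 :> K /\ v (m%:R / 2%:R) <= (trunc_log p m)%:Z.
Proof.
move=> m_odd; have m_gt0 : (0 < m)%N by case: m m_odd.
have m_neq0 : m%:R != 0 :> K by rewrite -(prednK m_gt0) char0.
have h2 : 2%:R != 0 :> K by apply: (char0 1).
split; first by rewrite mulf_neq0 ?invr_eq0.
by rewrite vM ?invr_eq0 // vV // v2 oppr0 addr0 v_nat_le.
Qed.

Definition integral (u : nat -> K) : Prop := forall k, vge v (u k) 0.
Definition pint (q : {poly K}) : Prop := integral (fun k => q`_k).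

Lemma pint_1 : pint 1.
Proof. by move=> k; rewrite coef1; case: eqP => _; [right; rewrite v1|left]. Qed.

Lemma pint_mul q r : pint q -> pint r -> pint (q * r).
Proof. by move=> hq hr k; rewrite coefM; apply: vge_sum => i _; apply: vge_mul0. Qed.

Lemma pint_prod (I : Type) (r : seq I) (P : pred I) (F : I -> {poly K}) :
  (forall i, P i -> pint (F i)) -> pint (\prod_(i <- r | P i) F i).
Proof.
move=> h; elim/big_rec: _ => [|i x Pi hx]; first exact: pint_1.
by apply: pint_mul => //; apply: h.
Qed.

Lemma pint_exp q n : pint q -> pint (q ^+ n).
Proof.
move=> hq; elim: n => [|n ih]; first by rewrite expr0; apply: pint_1.
by rewrite exprS; apply: pint_mul.
Qed.

Lemma pint_XaddC c : vge v c 0 -> pint ('X + c%:P).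
Proof.
move=> hc k; rewrite coefD coefX coefC.
by case: k => [|[|k]] /=; rewrite ?add0r ?addr0 //; [right; rewrite v1|left].
Qed.

Lemma pint_XsubC c : vge v c 0 -> pint ('X - c%:P).
Proof. by move=> hc; rewrite -polyCN; apply/pint_XaddC/vge_opp. Qed.

Lemma vge_ps_mul {f g : nat -> K} {b} n :
  integral f -> (forall k, vge v (g k) b) -> vge v (ps_mul f g n) b.
Proof. by move=> hf hg; apply: vge_sum => i _; apply: vge_mul0. Qed.

Lemma integral_by_strong_induction (u : nat -> K) :
  vge v (u 0%N) 0 ->
  (forall n, (forall k, (k <= n)%N -> vge v (u k) 0) -> vge v (u n.+1) 0) ->
  integral u.
Proof.
move=> h0 hS n; elim: n {-2}n (leqnn n) => [|n ih] k hk.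
  by move: hk; rewrite leqn0 => /eqP ->.
by rewrite leq_eqVlt in hk; case/orP: hk => [/eqP ->|/ih //]; apply: hS.
Qed.

Lemma integral_ps_inv (u : nat -> K) :
  u 0%N != 0 -> v (u 0%N) = 0 -> integral u -> integral (ps_inv u).
Proof.
have vu0V : u 0%N != 0 -> v (u 0%N) = 0 -> vge v (u 0%N)^-1 0.
  by move=> u0 vu0; right; rewrite vV // vu0.
move=> u0 vu0 hu; apply: integral_by_strong_induction => [|n ih].
  exact: vu0V.
rewrite ps_invS; apply: vge_mul0; first exact/vge_opp/vu0V.
by apply: vge_sum => -[j hj] _; apply: vge_mul0 => //; apply: ih; rewrite leq_subr.
Qed.

(* Since 2 is a unit (p odd), the square root of an integral series is
   integral. *)
Lemma integral_ps_sqrt (u : nat -> K) : integral u -> integral (ps_sqrt u).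
Proof.
move=> hu; apply: integral_by_strong_induction => [|n ih].
  by right; rewrite ps_sqrt0 v1.
rewrite ps_sqrtS; apply: vge_div_unit (char0 1) v2.
apply: vge_sub => //; apply: vge_sum => -[j hj] _.
by apply: vge_mul0; apply: ih => //; rewrite leq_subr.
Qed.

Section EulerEquation.
(* The local form of the equation for G1 at a point with parameter s: with
   Euler operator D = s d/ds, a series G satisfies sigma D G + f G = E, where
   f = a + sigma (D U)/(2U) for an integral series U with unit constant term
   (f is s times the expansion of h = Q'/(2Q)). *)
Variables (sigma a : K) (U f : nat -> K).
Hypothesis U0_neq0 : U 0%N != 0.
Hypothesis vU0 : v (U 0%N) = 0.
Hypothesis U_integral : integral U.
Hypothesis f_log_deriv : forall n,
  ps_mul (fun k => 2%:R * U k) f n = a * (2%:R * U n) + sigma * (n%:R * U n).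

(* The integrating factor V = sqrt(U / U(0)), with f = a + sigma (D V)/V. *)
Definition Vfac : nat -> K := ps_sqrt (fun k => (U 0%N)^-1 * U k).

Lemma Vfac_integral : integral Vfac.
Proof.
apply: integral_ps_sqrt => k; apply: vge_mul0 => //.
by right; rewrite vV // vU0.
Qed.

Lemma Vfac_log_deriv M :
  eqM M (2%:R * tr M U * Dp (tr M Vfac)) (tr M Vfac * Dp (tr M U)).
Proof.
set V := tr M Vfac.
have hU : eqM M (tr M U) ((U 0%N)%:P * (V * V)).
  move=> k hk; rewrite coefCM (eqM_ps_mul _ _ _ _ hk) !coef_tr //.
  by rewrite ps_sqrtP ?mulVKf ?mulVf //; apply: (char0 1).
have hDU := eqM_Dp hU; rewrite Dp_mul Dp_C mul0r add0r Dp_mul in hDU.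
apply: (eqM_trans (eqM_mul (eqM_mul (eqM_refl _) hU) (eqM_refl _))).
apply: eqM_sym; apply: (eqM_trans (eqM_mul (eqM_refl V) hDU)).
by have -> : V * ((U 0%N)%:P * (Dp V * V + V * Dp V)) =
  2%:R * ((U 0%N)%:P * (V * V)) * Dp V by ring.
Qed.

(* Multiplied by the integrating factor, the equation becomes diagonal:
   sigma D (V G) + a V G = V E, i.e. (sigma k + a) (V G)_k = (V E)_k. *)
Lemma euler_diagonal {G E} : (forall n, sigma * (n%:R * G n) + ps_mul f G n = E n) ->
  forall k, (sigma * k%:R + a) * ps_mul Vfac G k = ps_mul Vfac E k.
Proof.
move=> hG k; set V := tr k Vfac; set Gp := tr k G; set Ep := tr k E.
set U2 := 2%:R * tr k U; set F := tr k f.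
have hf : eqM k (U2 * F) (a%:P * U2 + sigma%:P * Dp (tr k U)).
  move=> j hj; rewrite /U2 -polyC_natr -tr_scale (eqM_ps_mul _ _ _ _ hj) !coef_tr //.
  by rewrite f_log_deriv coefD !coefCM coef_Dp !coef_tr.
have hE : eqM k (sigma%:P * Dp Gp + F * Gp) Ep.
  move=> j hj; rewrite coefD coefCM coef_Dp (eqM_ps_mul _ _ _ _ hj) !coef_tr //.
have hV := Vfac_log_deriv k; rewrite -/V -/U2 in hV.
have twisted : eqM k (sigma%:P * Dp (V * Gp) + a%:P * (V * Gp)) (V * Ep).
  (* Multiply by 2U, invertible at s = 0, and use the Leibniz rule together
     with hV and hf. *)
  apply: eqM_subr0; apply: (eqM_cancel (U := U2)).
    by rewrite /U2 -polyC_natr coefCM coef_tr // mulf_neq0 // (char0 1).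
  apply: (eqM_trans (eqM_mul (eqM_refl U2)
     (eqM_sub (eqM_refl _) (eqM_mul (eqM_refl V) (eqM_sym hE))))).
  rewrite Dp_mul.
  have -> : U2 * (sigma%:P * (Dp V * Gp + V * Dp Gp) + a%:P * (V * Gp)
      - V * (sigma%:P * Dp Gp + F * Gp)) =
    sigma%:P * Gp * (U2 * Dp V) + a%:P * U2 * V * Gp - V * Gp * (U2 * F) by ring.
  apply: (eqM_trans (eqM_sub (eqM_add (eqM_mul (eqM_refl _) hV) (eqM_refl _))
    (eqM_mul (eqM_refl _) hf))).
  by apply: eqM_eq; ring.
have := twisted k (leqnn k).
rewrite coefD !coefCM coef_Dp !(eqM_ps_mul _ _ _ _ (leqnn k)) !coef_tr // => <-.
by rewrite mulrA -mulrDl.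
Qed.

Lemma euler_bound G E (B : int) (T : nat -> int) :
  (forall n, sigma * (n%:R * G n) + ps_mul f G n = E n) ->
  (forall n, vge v (E n) B) ->
  (forall n, sigma * n%:R + a != 0) ->
  (forall n, v (sigma * n%:R + a) <= T n) ->
  {homo T : m n / (m <= n)%N >-> m <= n} ->
  forall m, vge v (G m) (B - T m).
Proof.
move=> hG hE den0 vden Tmono m.
have V0 : Vfac 0%N != 0 by rewrite /Vfac ps_sqrt0 oner_neq0.
have hH k : (k <= m)%N -> vge v (ps_mul Vfac G k) (B - T m).
  move=> hk.
  have -> : ps_mul Vfac G k = ps_mul Vfac E k / (sigma * k%:R + a).
    by rewrite -(euler_diagonal hG) [_ * ps_mul _ _ _]mulrC mulfK.
  apply: (vge_le (vge_div (vge_ps_mul k Vfac_integral hE) (den0 k))).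
  by rewrite lerB // (le_trans (vden k)) // Tmono.
rewrite -(ps_inv_mul_cancel G m V0); apply: vge_sum => -[j hj] _ /=.
apply: vge_mul0; last by apply: hH; rewrite leq_subr.
by apply: integral_ps_inv; rewrite ?ps_sqrt0 ?oner_neq0 ?v1 //; apply: Vfac_integral.
Qed.

End EulerEquation.

Lemma conv_of_log_bound {G : nat -> K} (C : int) (A : nat) :
  (forall m, vge v (G m) (C - (trunc_log p (2 * m + A))%:Z)) -> conv_open_disc v G.
Proof.
move=> hG c c_gt0 N.
set d := `|denq c|%N.
have cd_ge1 : 1 <= c * d%:R.
  rewrite /d natr_absz gtr0_norm ?denq_gt0 // -numqE ler1z -gtz0_ge1.
  by rewrite numq_gt0.
set D := `|N - C|%N.
have [L hL] := trunc_log_sublinear p A d D (prime_gt1 p_prime).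
exists L => l hl; case: (hG l) => [->|vGl]; [by left|right].
set e := trunc_log p (2 * l + A) in vGl hL.
have le_cl : (e + D)%:R <= c * l%:R :> rat.
  apply: (le_trans _ (ler_wpM2l (ltW c_gt0) (_ : (d * (e + D))%:R <= l%:R))).
    by rewrite natrM mulrA -{1}[(e + D)%:R]mul1r ler_wpM2r.
  by rewrite ler_nat; apply: hL.
have le_N : N <= (C - e%:Z) + (e + D)%:Z.
  by rewrite PoszD addrA subrK -lerBlDl lez_abs.
apply: (le_trans _ (lerD (_ : (C - e%:Z)%:~R <= (v (G l))%:~R :> rat) le_cl)).
  by move: le_N; rewrite -(ler_int rat) intrD.
by rewrite ler_int.
Qed.

Definition vbounded (u : nat -> K) : Prop := exists B, forall n, vge v (u n) B.

Lemma vbounded_poly (q : {poly K}) : vbounded (fun k => q`_k).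
Proof.
rewrite /vbounded; elim: (polyseq q) => [|x s [B hB]] /=.
  by exists 0 => k; rewrite nth_nil; left.
exists (Num.min B (v x)) => -[|k] /=.
  by apply: (vge_le (or_intror (lexx (v x)))); rewrite ge_min lexx orbT.
by apply: (vge_le (hB k)); rewrite ge_min lexx.
Qed.

Lemma vbounded_ps_mul (f g : nat -> K) :
  vbounded f -> integral g -> vbounded (ps_mul f g).
Proof.
case=> B hB hg; exists B => n; apply: vge_sum => i _.
by rewrite -[B]addr0; apply: vge_mul.
Qed.

Lemma vbounded_tail (u : nat -> K) : vbounded (fun n => u n.+1) -> vbounded u.
Proof.
case=> B hB; exists (Num.min B (v (u 0%N))) => -[|n].
  by apply: (vge_le (or_intror (lexx _))); rewrite ge_min lexx orbT.
by apply: (vge_le (hB n)); rewrite ge_min lexx.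
Qed.

Lemma vbounded_sum (I : finType) (F : I -> nat -> K) :
  (forall i, vbounded (F i)) -> vbounded (fun n => \sum_i F i n).
Proof.
move=> hF; rewrite /vbounded; elim: (index_enum I) => [|i r [B hB]].
  by exists 0 => n; rewrite big_nil; left.
have [Bi hBi] := hF i; exists (Num.min B Bi) => n; rewrite big_cons.
apply: vge_add; first by apply: (vge_le (hBi n)); rewrite ge_min lexx orbT.
by apply: (vge_le (hB n)); rewrite ge_min lexx.
Qed.

Lemma lcoef_pos (L : laurent K) (j : nat) : lcoef L j = L.2 (j + L.1)%N.
Proof. by rewrite /lcoef -PoszD. Qed.

Lemma lcoef_ps_laurent (f : nat -> K) (j : nat) : lcoef (ps_laurent f) j = f j.
Proof. by rewrite lcoef_pos addn0. Qed.

Lemma lcoef_lmul_ps (L : laurent K) (f : nat -> K) (j : nat) :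
  lcoef (lmul_ps L f) j = ps_mul L.2 f (j + L.1).
Proof. exact: lcoef_pos. Qed.

Lemma expand_fin_bounded (a : K) (P R : {poly K}) (m : nat) :
  (forall j, (j < m)%N -> (R \Po ('X + a%:P))`_j = 0) ->
  (R \Po ('X + a%:P))`_m != 0 -> v (R \Po ('X + a%:P))`_m = 0 ->
  pint (R \Po ('X + a%:P)) ->
  vbounded (fun j : nat => lcoef (expand_fin a P R) j).
Proof.
move=> below_m Rm_neq0 vRm R_int.
have [B hB] := vbounded_ps_mul (vbounded_poly (P \Po ('X + a%:P)))
  (integral_ps_inv (u := fun k => (R \Po ('X + a%:P))`_(k + m))
     Rm_neq0 vRm (fun k => R_int _)).
exists B => j; rewrite lcoef_pos /expand_fin /=.
by rewrite (find_first_nonzero below_m Rm_neq0).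
Qed.

Lemma expand_inf_bounded (P R : {poly K}) : R \is monic -> pint R ->
  vbounded (fun j : nat => lcoef (expand_inf P R) j).
Proof.
move=> R_monic R_int.
have rev0 : rev_coef R 0 = 1.
  by rewrite /rev_coef leq0n subn0 -lead_coefE (monicP R_monic).
have revR_int : integral (rev_coef R).
  by move=> k; rewrite /rev_coef; case: ifP => _; [apply: R_int|left].
have [B hB] : vbounded (rev_coef P).
  have [B hB] := vbounded_poly P.
  by exists B => k; rewrite /rev_coef; case: ifP => _; [apply: hB|left].
have rev0_neq0 : rev_coef R 0 != 0 by rewrite rev0 oner_neq0.
have vrev0 : v (rev_coef R 0) = 0 by rewrite rev0 v1.
have [B' hB'] := vbounded_ps_mul (ex_intro _ B hB)
  (integral_ps_inv rev0_neq0 vrev0 revR_int).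
by exists B' => j; rewrite lcoef_pos /expand_inf /=; case: ifP => _; [apply: hB'|left].
Qed.

Lemma dt_eq0_const {N : nat} {x : option 'I_N} {G : nat -> K} :
  (forall n, dt x G n = 0) -> forall n, (0 < n)%N -> G n = 0.
Proof.
move=> dG [|n] // _; case: x dG => [i|] dG.
  by have /eqP := dG n; rewrite /= mulf_eq0 (negPf (char0 n)) => /eqP.
by have /eqP := dG n.+2; rewrite /= oppr_eq0 mulf_eq0 (negPf (char0 n)) => /eqP.
Qed.

Lemma constant_conv (G : nat -> K) :
  (forall n, (0 < n)%N -> G n = 0) -> conv_open_disc v G.
Proof. by move=> hG c _ N; exists 1%N => l hl; left; apply: hG. Qed.

Section HyperellipticData.
Variables (g : nat) (lam : 'I_(g.*2.+1) -> K).
Hypothesis lam_integral : forall i, vge v (lam i) 0.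
Hypothesis lam_distinct : forall {i j}, i != j ->
  lam i - lam j != 0 /\ v (lam i - lam j) = 0.

Lemma XsubC_shift (b a : K) : ('X - b%:P) \Po ('X + a%:P) = 'X + (a - b)%:P.
Proof. by rewrite comp_polyB comp_polyX comp_polyC polyCB addrA. Qed.

(* Around its simple root lam_i, Q(lam_i + s) = s U_i(s) with U_i integral
   and U_i(0) a unit (the roots are distinct modulo p). *)
Definition Ucof i : {poly K} :=
  \prod_(j < g.*2.+1 | j != i) ('X + (lam i - lam j)%:P).

Lemma Q_at_root i : Qpoly lam \Po ('X + (lam i)%:P) = 'X * Ucof i.
Proof.
rewrite /Qpoly rmorph_prod (bigD1 i) //= XsubC_shift subrr addr0.
by congr (_ * _); apply: eq_bigr => j _; rewrite XsubC_shift.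
Qed.

Lemma Ucof_integral i : pint (Ucof i).
Proof. by apply: pint_prod => j _; apply/pint_XaddC/vge_sub. Qed.

Lemma Ucof0 i : (Ucof i)`_0 != 0 /\ v (Ucof i)`_0 = 0.
Proof.
rewrite -horner_coef0 /Ucof horner_prod.
elim/big_rec: _ => [|j x j_neq_i [x_neq0 vx]]; first by rewrite oner_neq0 v1.
rewrite eq_sym in j_neq_i; have [d_neq0 vd] := lam_distinct j_neq_i.
rewrite hornerD hornerX hornerC add0r mulf_neq0 //.
by rewrite vM // vd vx.
Qed.

(* The expansion of h = Q'/(2Q) at lam_i: a simple pole, whose series part
   s h = (U_i + D U_i)/(2 U_i). *)
Lemma hnum_at_root i : h_num lam \Po ('X + (lam i)%:P) = Ucof i + Dp (Ucof i).
Proof.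
have := deriv_comp (Qpoly lam) ('X + (lam i)%:P).
rewrite derivD derivX derivC addr0 mulr1 Q_at_root /h_num => <-.
by rewrite derivM derivX mul1r.
Qed.

Lemma hden_at_root_coef i k : (h_den lam \Po ('X + (lam i)%:P))`_k =
  if k is k'.+1 then 2%:R * (Ucof i)`_k' else 0.
Proof.
rewrite /h_den comp_polyM comp_polyC Q_at_root coefCM coefXM.
by case: k => [|k] /=; rewrite ?mulr0.
Qed.

Lemma phi_h_at_root i : (phi_h lam (Some i)).1 = 1%N /\
  forall n, (phi_h lam (Some i)).2 n =
    ps_mul (fun k => (Ucof i + Dp (Ucof i))`_k)
           (ps_inv (fun k => 2%:R * (Ucof i)`_k)) n.
Proof.
have first1 : find (fun c => c != 0) (h_den lam \Po ('X + (lam i)%:P)) = 1%N.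
  apply: find_first_nonzero => [[|//]|]; first by rewrite -/(_`_0) hden_at_root_coef.
  by rewrite -/(_`_1) hden_at_root_coef mulf_neq0 ?(char0 1) //; case: (Ucof0 i).
rewrite /phi_h /expand /expand_fin /= first1; split=> // n.
apply: eq_ps_mul => k; first by rewrite hnum_at_root.
by apply: eq_ps_inv => k'; rewrite addn1 hden_at_root_coef.
Qed.

(* Principal parts expanded at a finite point lam_i have bounded
   coefficients: their denominators are powers of s or of units. *)
Lemma principal_part_bounded_fin i y (L : laurent K) :
  vbounded (fun j : nat => lcoef (expand_pr lam (Some i) y L) j).
Proof.
rewrite /expand_pr /expand; case: y => [j|]; last first.
  have den1 : pr_den lam None L \Po ('X + (lam i)%:P) = 1.
    by rewrite /= -polyC1 comp_polyC.
  apply: (@expand_fin_bounded _ _ _ 0%N); rewrite den1 ?coef1 ?oner_neq0 ?v1 //.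
  exact: pint_1.
have den_shift : pr_den lam (Some j) L \Po ('X + (lam i)%:P) =
    ('X + (lam i - lam j)%:P) ^+ L.1.
  by rewrite /= rmorphXn; congr (_ ^+ _); apply: XsubC_shift.
have [ij|ij] := eqVneq i j.
  subst j; rewrite subrr polyC0 addr0 in den_shift.
  have pint_X : pint 'X.
    by move=> k; rewrite coefX; case: eqP => _; [right; rewrite v1|left].
  apply: (@expand_fin_bounded _ _ _ L.1);
    rewrite den_shift ?coefXn ?eqxx ?oner_neq0 ?v1 //.
  - by move=> k hk; rewrite coefXn (ltn_eqF hk).
  - exact: pint_exp.
have [d_neq0 vd] := lam_distinct ij.
have d0 : (('X + (lam i - lam j)%:P) ^+ L.1)`_0 = (lam i - lam j) ^+ L.1.
  by rewrite -horner_coef0 horner_exp hornerD hornerX hornerC add0r.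
apply: (@expand_fin_bounded _ _ _ 0%N); rewrite den_shift ?d0 ?expf_neq0 //.
- by elim: (L.1) => [|n ih]; rewrite ?expr0 ?v1 // exprS vM ?expf_neq0 // vd ih.
- by apply/pint_exp/pint_XaddC/vge_sub.
Qed.

(* At infinity all the denominators are monic and integral. *)
Lemma principal_part_bounded_inf y (L : laurent K) :
  vbounded (fun j : nat => lcoef (expand_pr lam None y L) j).
Proof.
rewrite /expand_pr /expand; case: y => [j|]; apply: expand_inf_bounded => /=.
- by apply: monic_exp; exact: monicXsubC.
- exact/pint_exp/pint_XsubC.
- exact: monic1.
- exact: pint_1.
Qed.

(* At infinity: Q is monic of degree 2g+1 with integral coefficients, so
   its reversal s^(2g+1) Q(1/s) is integral with constant term 1, and that
   of Q' is (2g+1 - k) times it on the k-th coefficient. *)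
Lemma Q_monic : Qpoly lam \is monic.
Proof. by apply: monic_prod => j _; exact: monicXsubC. Qed.

Lemma Q_size : size (Qpoly lam) = g.*2.+2.
Proof. by rewrite /Qpoly size_prod_XsubC [index_enum _]unlock -enumT -cardT card_ord. Qed.

Lemma Q_integral : pint (Qpoly lam).
Proof. by apply: pint_prod => j _; apply: pint_XsubC. Qed.

Lemma hden_size : size (h_den lam) = g.*2.+2.
Proof. by rewrite /h_den size_Cmul ?Q_size //; exact: (char0 1). Qed.

Lemma hnum_size : size (h_num lam) = g.*2.+1.
Proof.
have Q_neq0 : Qpoly lam != 0 by rewrite -size_poly_gt0 Q_size.
apply/eqP; rewrite eqn_leq; apply/andP; split.
  by have := lt_size_deriv Q_neq0; rewrite Q_size /h_num.
rewrite ltnNge; apply/negP => /(nth_default 0)/eqP; apply/negP.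
rewrite /h_num coef_deriv; have := monicP Q_monic; rewrite lead_coefE Q_size => ->.
by rewrite -mulr_natr mul1r char0.
Qed.

Lemma rev_hden k : rev_coef (h_den lam) k = 2%:R * rev_coef (Qpoly lam) k.
Proof.
rewrite /rev_coef hden_size Q_size; case: ifP => _; last by rewrite mulr0.
by rewrite /h_den coefCM.
Qed.

Lemma rev_hnum k : rev_coef (h_num lam) k =
  ((g.*2.+1)%:R - k%:R) * rev_coef (Qpoly lam) k.
Proof.
rewrite /rev_coef hnum_size Q_size /=.
case: (ltngtP k g.*2.+1) => hk.
- have hk' : (k <= g.*2)%N by rewrite -ltnS.
  rewrite hk' /h_num coef_deriv -subSn // -natrB ?mulr_natl //.
  exact: ltnW.
- by rewrite leqNgt (ltnW hk) mulr0.
- by rewrite hk leqNgt ltnSn subrr mul0r.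
Qed.

Lemma phi_h_at_inf : (phi_h lam None).1 = g.*2 /\
  forall k, (phi_h lam None).2 k =
    if (g.*2.+1 <= k)%N then
      ps_mul (rev_coef (h_num lam)) (ps_inv (rev_coef (h_den lam))) (k - g.*2.+1)
    else 0.
Proof. by rewrite /phi_h /expand /expand_inf /= hnum_size hden_size. Qed.

(* All denominators met below have valuation at most log_p(2n + 2g + 1). *)
Definition Tlog (n : nat) : int := (trunc_log p (2 * n + g.*2.+1))%:Z.

Lemma Tlog_mono : {homo Tlog : m n / (m <= n)%N >-> m <= n}.
Proof. by move=> m n h; rewrite lez_nat leq_trunc_log // leq_add2r leq_mul2l h orbT. Qed.

Lemma half_odd_Tlog m n : odd m -> (m <= 2 * n + g.*2.+1)%N ->
  m%:R / 2%:R != 0 :> K /\ v (m%:R / 2%:R) <= Tlog n.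
Proof.
move=> m_odd hm; have [m_neq0 vm] := v_half_odd _ m_odd; split=> //.
by apply: (le_trans vm); rewrite lez_nat leq_trunc_log.
Qed.

Definition principal_sum (G1 : option 'I_(g.*2.+1) -> nat -> K) x (j : int) : K :=
  \sum_y lcoef (expand_pr lam x y (lmul_ps (phi_h lam y) (G1 y))) j.

Lemma principal_sum_bounded G1 x : vbounded (fun n : nat => principal_sum G1 x n).
Proof.
rewrite /principal_sum; apply: vbounded_sum => y.
by case: x => [i|]; [apply: principal_part_bounded_fin|apply: principal_part_bounded_inf].
Qed.

(* At a finite branch point lam_i the equation is the Euler equation with
   sigma = 1, a = 1/2 and U = U_i. *)
Lemma G1_conv_fin {G1 i} :
  (forall j : int, lcoef (ps_laurent (dt (Some i) (G1 (Some i)))) j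
     + lcoef (lmul_ps (phi_h lam (Some i)) (G1 (Some i))) j
     = principal_sum G1 (Some i) j) ->
  conv_open_disc v (G1 (Some i)).
Proof.
move=> heq; set G := G1 (Some i); have [phi1 phi2] := phi_h_at_root i.
set f := (phi_h lam (Some i)).2.
set E := fun n => if n is n'.+1 then principal_sum G1 (Some i) n' else ps_mul f G 0.
have hG n : 1 * (n%:R * G n) + ps_mul f G n = E n.
  case: n => [|n]; first by rewrite mul0r mulr0 add0r.
  by rewrite mul1r /E -heq lcoef_ps_laurent lcoef_lmul_ps phi1 addn1.
have [B hB] : vbounded E by apply: vbounded_tail; apply: principal_sum_bounded.
have h2 : 2%:R != 0 :> K by apply: (char0 1).
have [U0_neq0 vU0] := Ucof0 i.
have half n : 1 * n%:R + 2%:R^-1 = (n.*2.+1)%:R / 2%:R :> K.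
  have -> : (n.*2.+1 = n * 2 + 1)%N by rewrite -muln2 addn1.
  by rewrite natrD natrM; field.
have den n : (n.*2.+1)%:R / 2%:R != 0 :> K /\ v ((n.*2.+1)%:R / 2%:R) <= Tlog n.
  apply: half_odd_Tlog; first by rewrite /= odd_double.
  by rewrite -mul2n addnS ltnS leq_addr.
apply: (conv_of_log_bound B g.*2.+1).
apply: (@euler_bound 1 2%:R^-1 (fun k => (Ucof i)`_k) f U0_neq0 vU0 (Ucof_integral i)
  _ G E B Tlog hG hB).
- move=> n; rewrite (eq_ps_mul n (frefl _) phi2).
  by rewrite ps_mul_inv_cancel ?mulf_neq0 // coefD coef_Dp mulKf // mul1r.
- by move=> n; rewrite half; case: (den n).
- by move=> n; rewrite half; case: (den n).
- exact: Tlog_mono.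
Qed.

(* The denominators at infinity: -n + (2g+1)/2 = +-m/2 with m odd and
   m <= 2n + 2g + 1. *)
Lemma inf_denominator n : -1 * n%:R + (g.*2.+1)%:R / 2%:R != 0 :> K /\
  v (-1 * n%:R + (g.*2.+1)%:R / 2%:R) <= Tlog n.
Proof.
have h2 : 2%:R != 0 :> K by apply: (char0 1).
have [le_ng|lt_gn] := leqP n g.
  have -> : -1 * n%:R + (g.*2.+1)%:R / 2%:R = ((g - n).*2.+1)%:R / 2%:R :> K.
    have -> : (g.*2.+1 = (g - n).*2.+1 + n * 2)%N by lia.
    by rewrite natrD natrM; field.
  by apply: half_odd_Tlog; [rewrite /= odd_double | lia].
set m := (n - g.+1).*2.+1.
have -> : -1 * n%:R + (g.*2.+1)%:R / 2%:R = - (m%:R / 2%:R) :> K.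
  have -> : n%:R = (m%:R + (g.*2.+1)%:R) / 2%:R :> K.
    by rewrite -natrD (_ : (m + g.*2.+1 = n * 2)%N) ?natrM ?mulfK //; lia.
  by field.
rewrite oppr_eq0 vN; apply: half_odd_Tlog; [by rewrite /= odd_double | lia].
Qed.

(* At infinity the equation is the Euler equation with sigma = -1,
   a = (2g+1)/2 and U the reversed polynomial Q(1/s) s^(2g+1). *)
Lemma G1_conv_inf {G1} :
  (forall j : int, lcoef (ps_laurent (dt (@None 'I_(g.*2.+1)) (G1 None))) j
     + lcoef (lmul_ps (phi_h lam None) (G1 None)) j = principal_sum G1 None j) ->
  conv_open_disc v (G1 None).
Proof.
move=> heq; set G := G1 None; have [phi1 phi2] := phi_h_at_inf.
set f := ps_mul (rev_coef (h_num lam)) (ps_inv (rev_coef (h_den lam))).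
set E := fun n : nat => principal_sum G1 None n.+1.
have hG n : -1 * (n%:R * G n) + ps_mul f G n = E n.
  rewrite /E -heq lcoef_ps_laurent lcoef_lmul_ps phi1 addSnnS mulN1r.
  rewrite (@ps_mul_shift _ _ f) //.
  - by move=> k hk; rewrite phi2 leqNgt hk.
  - by move=> k; rewrite phi2 leq_addl addnK.
have [B hB] : vbounded E.
  by have [B hB] := principal_sum_bounded G1 None; exists B => n; apply: hB.
have h2 : 2%:R != 0 :> K by apply: (char0 1).
have revQ0 : rev_coef (Qpoly lam) 0 = 1.
  by rewrite /rev_coef leq0n subn0 -lead_coefE (monicP Q_monic).
have revQ_int : integral (rev_coef (Qpoly lam)).
  by move=> k; rewrite /rev_coef; case: ifP => _; [apply: Q_integral|left].
apply: (conv_of_log_bound B g.*2.+1).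
apply: (@euler_bound (-1) ((g.*2.+1)%:R / 2%:R) (rev_coef (Qpoly lam)) f _ _ revQ_int
  _ G E B Tlog hG hB).
- by rewrite revQ0 oner_neq0.
- by rewrite revQ0 v1.
- move=> n; have e : (fun k => 2%:R * rev_coef (Qpoly lam) k) =1 rev_coef (h_den lam).
    by move=> k; rewrite rev_hden.
  rewrite (eq_ps_mul n e (frefl f)) ps_mul_inv_cancel ?rev_hden ?revQ0 ?mulr1 // rev_hnum.
  by rewrite mulrA mulfVK // mulN1r mulrBl.
- by move=> n; case: (inf_denominator n).
- by move=> n; case: (inf_denominator n).
- exact: Tlog_mono.
Qed.

End HyperellipticData.

End Valuation.

Theorem mainTheorem5 (p : nat) (K : fieldType) (v : K -> int)
  (HK : Witt_frac_field p v)
  (g : nat) (hg : (0 < g)%N)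
  (lam : 'I_(g.*2.+1) -> K)
  (hlam_int : forall i, vge v (lam i) 0)
  (hlam_dist : forall i j, i != j -> lam i - lam j != 0 /\ v (lam i - lam j) = 0)
  (G0 G1 : option 'I_(g.*2.+1) -> nat -> K)
  (hinf : G0 None 0%N = 0 /\ G1 None 0%N = 0)
  (heq0 : forall x n, dt x (G0 x) n = 0)
  (heq1 : forall x (j : int),
     lcoef (ps_laurent (dt x (G1 x))) j + lcoef (lmul_ps (phi_h lam x) (G1 x)) j
     = \sum_(y : option 'I_(g.*2.+1))
         lcoef (expand_pr lam x y (lmul_ps (phi_h lam y) (G1 y))) j) :
  forall x : option 'I_(g.*2.+1),
    conv_open_disc v (G0 x) /\ conv_open_disc v (G1 x).
Proof.
case: HK => [[p_prime p_gt2] char0 [vM [vD vp]] _ _] x; split.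
  by apply: constant_conv; apply: (dt_eq0_const char0 (heq0 x)).
case: x => [i|].
  exact: (G1_conv_fin p_prime p_gt2 char0 vM vD vp hlam_int hlam_dist (heq1 (Some i))).
exact: (G1_conv_inf p_prime p_gt2 char0 vM vD vp hlam_int hlam_dist (heq1 None)).
Qed.
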